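(* Let $n,m\in\mathbb{N}$, let $p>1$, let $E_0>E_D>0$, and define $E:[0,1]\to(0,\infty)$ by $E(\delta)=\left(\frac{1-\delta}{E_0}+\frac{\delta}{E_D}\right)^{-1}$. Let $\hat{\mathbf K}_1,\dots,\hat{\mathbf K}_n\in\mathbb{R}^{m\times m}$ be symmetric positive semidefinite matrices, let $\mathbf f\in\mathbb{R}^m$, and let $\tilde{\boldsymbol\rho}\in\mathbb{R}^n$ with $\tilde\rho_e>0$ for all $e$. For $\boldsymbol\delta\in[0,1]^n$ set $\mathbf K_e(\boldsymbol\rho,\boldsymbol\delta)=\tilde\rho_e^{\,p}E(\delta_e)\hat{\mathbf K}_e$ and $\mathbf K(\boldsymbol\rho,\boldsymbol\delta)=\sum_{e=1}^n\mathbf K_e(\boldsymbol\rho,\boldsymbol\delta)$, and assume that $\mathbf K(\boldsymbol\rho,\boldsymbol\delta)$ is positive definite for all $\boldsymbol\delta\in[0,1]^n$. For $\epsilon\ge 0$ define $$\mathcal J_\epsilon(\boldsymbol\rho,\boldsymbol\delta,\mathbf u)=2\mathbf f^\top\mathbf u-\sum_{e=1}^n\mathbf u^\top\mathbf K_e(\boldsymbol\rho,\boldsymbol\delta)\mathbf u-\frac{\epsilon}{2}\|\boldsymbol\delta\|^2 .$$ Then, for fixed $\boldsymbol\rho$, the function $(\boldsymbol\delta,\mathbf u)\mapsto\mathcal J_\epsilon(\boldsymbol\rho,\boldsymbol\delta,\mathbf u)$ on $[0,1]^n\times\mathbb{R}^m$ is concave if $\epsilon=0$ and strictly concave if $\e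psilon>0$.
   Context: This is a discretized linear-elasticity compliance setting: $\hat{\mathbf K}_e$ is the element stiffness matrix of finite element $e$ for a unit material tensor, $\tilde{\boldsymbol\rho}$ is the (filtered) pseudo-density of a topology $\boldsymbol\rho$ (the dependence of $\mathbf K_e$ on $\boldsymbol\rho$ is only through $\tilde{\boldsymbol\rho}$), $p$ is the SIMP penalty exponent, and $\delta_e\in[0,1]$ is a material degradation parameter interpolating inversely between Young's moduli $E_0$ and $E_D$. *)

From HB Require Import structures.
From mathcomp Require Import all_boot all_order all_algebra.
From mathcomp Require Import all_classical all_reals all_analysis.
Set Implicit Arguments. Unset Strict Implicit. Unset Printing Implicit Defensive.
Import Order.TTheory GRing.Theory Num.Theory.
Local Open Scope ring_scope.

Section Defs.
Variable R : realType.

Definition Emod (E0 ED d : R) : R := ((1 - d) / E0 + d / ED)^-1.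

Definition qform (m : nat) (A : 'M[R]_m) (u : 'cV[R]_m) : R := (u^T *m A *m u) 0 0.

Definition symmetric_mx (m : nat) (A : 'M[R]_m) : Prop := A^T = A.
Definition psd_mx (m : nat) (A : 'M[R]_m) : Prop := forall v : 'cV[R]_m, 0 <= qform A v.
Definition pd_mx (m : nat) (A : 'M[R]_m) : Prop :=
  forall v : 'cV[R]_m, v != 0 -> 0 < qform A v.

Definition in_box01 (n : nat) (d : 'cV[R]_n) : Prop := forall e, 0 <= d e 0 <= 1.

Definition Kelem (n m : nat) (p E0 ED : R) (Khat : 'I_n -> 'M[R]_m)
  (rt : 'I_n -> R) (d : 'cV[R]_n) (e : 'I_n) : 'M[R]_m :=
  ((rt e `^ p) * Emod E0 ED (d e 0)) *: Khat e.

Definition Kglob (n m : nat) (p E0 ED : R) (Khat : 'I_n -> 'M[R]_m)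
  (rt : 'I_n -> R) (d : 'cV[R]_n) : 'M[R]_m :=
  \sum_(e < n) Kelem p E0 ED Khat rt d e.

Definition sqnorm (n : nat) (d : 'cV[R]_n) : R := \sum_(e < n) d e 0 ^+ 2.

Definition Jeps (n m : nat) (p E0 ED eps : R) (Khat : 'I_n -> 'M[R]_m)
  (rt : 'I_n -> R) (f : 'cV[R]_m) (d : 'cV[R]_n) (u : 'cV[R]_m) : R :=
  2 * (f^T *m u) 0 0 - \sum_(e < n) qform (Kelem p E0 ED Khat rt d e) u
  - eps / 2 * sqnorm d.

Definition concave_box (n m : nat) (F : 'cV[R]_n -> 'cV[R]_m -> R) : Prop :=
  forall (d1 d2 : 'cV[R]_n) (u1 u2 : 'cV[R]_m) (t : R),
    in_box01 d1 -> in_box01 d2 -> 0 <= t <= 1 ->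
    t * F d1 u1 + (1 - t) * F d2 u2
      <= F (t *: d1 + (1 - t) *: d2) (t *: u1 + (1 - t) *: u2).

Definition strictly_concave_box (n m : nat) (F : 'cV[R]_n -> 'cV[R]_m -> R) : Prop :=
  forall (d1 d2 : 'cV[R]_n) (u1 u2 : 'cV[R]_m) (t : R),
    in_box01 d1 -> in_box01 d2 -> (d1, u1) != (d2, u2) -> 0 < t < 1 ->
    t * F d1 u1 + (1 - t) * F d2 u2
      < F (t *: d1 + (1 - t) *: d2) (t *: u1 + (1 - t) *: u2).
End Defs.

From HB Require Import structures.
From mathcomp Require Import all_boot all_order all_algebra.
From mathcomp Require Import all_classical all_reals all_analysis.
From mathcomp Require Import ring lra.
Import Order.TTheory GRing.Theory Num.Theory.
Set Implicit Arguments. Unset Strict Implicit. Unset Printing Implicit Defensive.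
Local Open Scope ring_scope.

(* The compliance s(delta) = 1/E(delta) is affine in delta and positive on [0, 1],
   so each element term u^T K_e u = rt_e^p * q_e(u) / s(delta_e), where
   q_e(u) = u^T Khat_e u, is a nonnegative multiple of the perspective
   (u, s) |-> q_e(u) / s of a positive semidefinite quadratic form, hence jointly
   convex in (delta, u): along a segment whose endpoints have compliances a and b,
   its convexity gap is a nonnegative multiple of q_e(b u1 - a u2).  For eps > 0,
   strictness comes from -eps/2 ||delta||^2 when delta varies along the segment,
   and from the positive definiteness of K(rho, delta) when it does not. *)

Section QuadraticForms.
Variables (R : realType) (m : nat).
Implicit Types (A : 'M[R]_m) (u x y : 'cV[R]_m).

Lemma qformZ (k : R) A u : qform (k *: A) u = k * qform A u.
Proof. by rewrite /qform -scalemxAr -scalemxAl mxE. Qed.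

Lemma qform_sum n (A : 'I_n -> 'M[R]_m) u :
  qform (\sum_e A e) u = \sum_e qform (A e) u.
Proof. by rewrite /qform mulmx_sumr mulmx_suml summxE. Qed.

Lemma qform_lin_comb A (a b : R) x y :
  qform A (a *: x + b *: y) =
  a ^+ 2 * qform A x + a * b * ((x^T *m A *m y) 0 0 + (y^T *m A *m x) 0 0)
  + b ^+ 2 * qform A y.
Proof.
rewrite /qform [_^T]linearD /= ![(_ *: _)^T]linearZ /= !(mulmxDl, mulmxDr).
by rewrite -!(scalemxAl, scalemxAr) !mxE; ring.
Qed.

Lemma qform_convex_gap A (t : R) u1 u2 :
  t * qform A u1 + (1 - t) * qform A u2 - qform A (t *: u1 + (1 - t) *: u2) =
  t * (1 - t) * qform A (u1 - u2).
Proof.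
have -> : u1 - u2 = 1 *: u1 + (-1) *: u2 by rewrite scale1r scaleN1r.
by rewrite !qform_lin_comb; ring.
Qed.

Lemma qform_perspective_gap A (a b t : R) u1 u2 :
  a != 0 -> b != 0 -> t * a + (1 - t) * b != 0 ->
  t * (qform A u1 / a) + (1 - t) * (qform A u2 / b)
    - qform A (t *: u1 + (1 - t) *: u2) / (t * a + (1 - t) * b) =
  t * (1 - t) / (a * b * (t * a + (1 - t) * b)) * qform A (b *: u1 - a *: u2).
Proof.
by move=> a0 b0 s0; rewrite -[- (a *: u2)]scaleNr !qform_lin_comb; field; rewrite a0 b0 s0.
Qed.

Lemma qform_perspective_convex A (a b t : R) u1 u2 :
  psd_mx A -> 0 < a -> 0 < b -> 0 <= t <= 1 ->
  qform A (t *: u1 + (1 - t) *: u2) / (t * a + (1 - t) * b) <=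
  t * (qform A u1 / a) + (1 - t) * (qform A u2 / b).
Proof.
move=> A_psd a_gt0 b_gt0 /andP[t_ge0 t_le1].
have s_gt0 : 0 < t * a + (1 - t) * b by nra.
rewrite -subr_ge0 qform_perspective_gap ?gt_eqF //.
by rewrite mulr_ge0 // divr_ge0 ?mulr_ge0 ?subr_ge0 // ltW // !mulr_gt0.
Qed.

Lemma qform_strictly_convex A (t : R) u1 u2 :
  pd_mx A -> 0 < t < 1 -> u1 != u2 ->
  qform A (t *: u1 + (1 - t) *: u2) < t * qform A u1 + (1 - t) * qform A u2.
Proof.
move=> A_pd /andP[t_gt0 t_lt1] u12.
rewrite -subr_gt0 qform_convex_gap !mulr_gt0 ?subr_gt0 //.
by apply: A_pd; rewrite subr_eq0.
Qed.

End QuadraticForms.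

Section SquaredNorm.
Variables (R : realType) (n : nat).
Implicit Types d : 'cV[R]_n.

Lemma sqnorm_ge0 d : 0 <= sqnorm d.
Proof. by apply: sumr_ge0 => e _; apply: sqr_ge0. Qed.

Lemma sqnorm_gt0 d : d != 0 -> 0 < sqnorm d.
Proof.
move=> d_neq0; rewrite lt_def sqnorm_ge0 andbT.
apply: contra_neq d_neq0 => /psumr_eq0P d_eq0.
apply/matrixP => i j; rewrite (ord1 j) !mxE.
by apply/eqP; rewrite -sqrf_eq0 d_eq0 // => k _; apply: sqr_ge0.
Qed.

Lemma sqnorm_convex_gap d1 d2 (t : R) :
  t * sqnorm d1 + (1 - t) * sqnorm d2 - sqnorm (t *: d1 + (1 - t) *: d2) =
  t * (1 - t) * sqnorm (d1 - d2).
Proof.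
rewrite /sqnorm !mulr_sumr -big_split -sumrB /=.
by apply: eq_bigr => e _; rewrite !mxE; ring.
Qed.

End SquaredNorm.

Section Compliance.
Variable R : realType.

Definition invEmod (E0 ED d : R) : R := (1 - d) / E0 + d / ED.

Lemma invEmod_gt0 (E0 ED d : R) :
  0 < E0 -> 0 < ED -> 0 <= d <= 1 -> 0 < invEmod E0 ED d.
Proof.
move=> E0_gt0 ED_gt0 /andP[d_ge0 d_le1].
have : 0 < E0^-1 by rewrite invr_gt0.
have : 0 < ED^-1 by rewrite invr_gt0.
rewrite /invEmod; nra.
Qed.

Lemma invEmod_convex_comb (E0 ED t x y : R) :
  invEmod E0 ED (t * x + (1 - t) * y) =
  t * invEmod E0 ED x + (1 - t) * invEmod E0 ED y.
Proof. by rewrite /invEmod; ring. Qed.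

Variables (n m : nat) (p E0 ED : R) (Khat : 'I_n -> 'M[R]_m) (rt : 'I_n -> R).
Hypotheses (E0_gt0 : 0 < E0) (ED_gt0 : 0 < ED).
Hypothesis Khat_psd : forall e, psd_mx (Khat e).

Definition energy (d : 'cV[R]_n) (u : 'cV[R]_m) : R :=
  \sum_(e < n) qform (Kelem p E0 ED Khat rt d e) u.

Lemma qform_Kelem d u e :
  qform (Kelem p E0 ED Khat rt d e) u =
  rt e `^ p * (qform (Khat e) u / invEmod E0 ED (d e 0)).
Proof. by rewrite qformZ -mulrA [_^-1 * _]mulrC. Qed.

Lemma energy_Kglob d u : energy d u = qform (Kglob p E0 ED Khat rt d) u.
Proof. by rewrite qform_sum. Qed.

Lemma energy_convex d1 d2 u1 u2 (t : R) :
  in_box01 d1 -> in_box01 d2 -> 0 <= t <= 1 ->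
  energy (t *: d1 + (1 - t) *: d2) (t *: u1 + (1 - t) *: u2) <=
  t * energy d1 u1 + (1 - t) * energy d2 u2.
Proof.
move=> d1_box d2_box t01; rewrite !mulr_sumr -big_split /=.
apply: ler_sum => e _; rewrite !qform_Kelem !mxE invEmod_convex_comb.
rewrite (mulrCA t) (mulrCA (1 - t)) -mulrDr ler_wpM2l ?powR_ge0 //.
by apply: qform_perspective_convex => //;
  [apply: invEmod_gt0 (d1_box e) | apply: invEmod_gt0 (d2_box e)].
Qed.

Lemma energy_strictly_convex d u1 u2 (t : R) :
  pd_mx (Kglob p E0 ED Khat rt d) -> 0 < t < 1 -> u1 != u2 ->
  energy d (t *: u1 + (1 - t) *: u2) < t * energy d u1 + (1 - t) * energy d u2.
Proof. by move=> *; rewrite !energy_Kglob qform_strictly_convex. Qed.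

End Compliance.

Lemma Jeps_concavity_gap (R : realType) (n m : nat) (p E0 ED eps : R)
    (Khat : 'I_n -> 'M[R]_m) (rt : 'I_n -> R) (f : 'cV[R]_m)
    d1 d2 u1 u2 (t : R) :
  let J := Jeps p E0 ED eps Khat rt f in
  let W := energy p E0 ED Khat rt in
  J (t *: d1 + (1 - t) *: d2) (t *: u1 + (1 - t) *: u2)
    - (t * J d1 u1 + (1 - t) * J d2 u2) =
  (t * W d1 u1 + (1 - t) * W d2 u2
    - W (t *: d1 + (1 - t) *: d2) (t *: u1 + (1 - t) *: u2))
  + eps / 2 * (t * (1 - t) * sqnorm (d1 - d2)).
Proof.
rewrite /= /Jeps -sqnorm_convex_gap mulmxDr -!scalemxAr !mxE -!/(energy _ _ _ _ _ _ _).
ring.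
Qed.

Theorem theorem1 (R : realType) (n m : nat) (p E0 ED eps : R)
  (Khat : 'I_n -> 'M[R]_m) (f : 'cV[R]_m) (rt : 'I_n -> R) :
  1 < p -> 0 < ED -> ED < E0 ->
  (forall e, symmetric_mx (Khat e)) -> (forall e, psd_mx (Khat e)) ->
  (forall e, 0 < rt e) ->
  (forall d : 'cV[R]_n, in_box01 d -> pd_mx (Kglob p E0 ED Khat rt d)) ->
  0 <= eps ->
  (eps = 0 -> concave_box (Jeps p E0 ED eps Khat rt f)) /\
  (0 < eps -> strictly_concave_box (Jeps p E0 ED eps Khat rt f)).
Proof.
move=> _ ED_gt0 ED_lt_E0 _ Khat_psd _ K_pd _.
have E0_gt0 : 0 < E0 := lt_trans ED_gt0 ED_lt_E0.
split=> [eps0 | eps_gt0] d1 d2 u1 u2 t d1_box d2_box.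
  move=> t01; rewrite -subr_ge0 Jeps_concavity_gap eps0 !mul0r addr0 subr_ge0.
  exact: energy_convex.
move=> du12 t01; have /andP[t_gt0 t_lt1] := t01.
have t01w : 0 <= t <= 1 by rewrite !ltW.
rewrite -subr_gt0 Jeps_concavity_gap.
have [d12 | d12] := eqVneq d1 d2.
  subst d2; have u12 : u1 != u2 by apply: contraNneq du12 => ->.
  apply: ltr_wpDr; first by rewrite !mulr_ge0 ?invr_ge0 ?sqnorm_ge0 ?subr_ge0 ?ltW.
  have -> : t *: d1 + (1 - t) *: d1 = d1 by rewrite -scalerDl addrC subrK scale1r.
  by rewrite subr_gt0; apply: energy_strictly_convex => //; apply: K_pd.
apply: ltr_wpDl; first by rewrite subr_ge0 energy_convex.
by rewrite !mulr_gt0 ?invr_gt0 ?subr_gt0 ?sqnorm_gt0 ?subr_eq0.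
Qed.
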